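(* Let $a,b,c$ be pairwise distinct positive real numbers, and let $D_1,D_2$ be the $6\times 6$ symmetric matrices given in the context. Let $\mathbf v=(1,1,1,1,1,1)^T$. Then $$\langle D_1^{-1}\mathbf v,\mathbf v\rangle\neq\langle D_2^{-1}\mathbf v,\mathbf v\rangle.$$
   Context: The matrix $D_1$ is $$D_1=\begin{pmatrix} a+c&0&0&-c/2&0&0\\ 0&a+b&0&0&-a/2&0\\ 0&0&b+c&0&0&-b/2\\ -c/2&0&0&b+c&-c/2&-b/2\\ 0&-a/2&0&-c/2&a+c&-a/2\\ 0&0&-b/2&-b/2&-a/2&a+b\end{pmatrix},$$ and $D_2$ is obtained from $D_1$ by interchanging $b$ and $c$ in every entry. These are the weighted Laplacians of the weighted combinatorial graph analogs of the $7_1$ Buser–Conway–Doyle–Semmler pair; the quantity $\langle D^{-1}\mathbf v,\mathbf v\rangle$ is their (combinatorial) torsional rigidity. *)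

From HB Require Import structures.
From mathcomp Require Import all_boot all_order all_algebra.
Set Implicit Arguments. Unset Strict Implicit. Unset Printing Implicit Defensive.
Import Order.TTheory GRing.Theory Num.Theory.
Local Open Scope ring_scope.

(* Row-major list of entries of D_1 (indices 0..5 correspond to 1..6). *)
Definition D1_entries {R : fieldType} (a b c : R) : seq (seq R) :=
  [:: [:: a + c; 0; 0; - (c / 2); 0; 0];
      [:: 0; a + b; 0; 0; - (a / 2); 0];
      [:: 0; 0; b + c; 0; 0; - (b / 2)];
      [:: - (c / 2); 0; 0; b + c; - (c / 2); - (b / 2)];
      [:: 0; - (a / 2); 0; - (c / 2); a + c; - (a / 2)];
      [:: 0; 0; - (b / 2); - (b / 2); - (a / 2); a + b]].

Definition D1 {R : fieldType} (a b c : R) : 'M[R]_6 :=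
  \matrix_(i < 6, j < 6) nth 0 (nth [::] (D1_entries a b c) i) j.

Definition D2 {R : fieldType} (a b c : R) : 'M[R]_6 := D1 a c b.

Definition vones {R : fieldType} : 'cV[R]_6 := const_mx 1.

Definition torsion {R : fieldType} (D : 'M[R]_6) : R :=
  ((vones^T *m invmx D *m vones) 0 0).

From HB Require Import structures.
From mathcomp Require Import all_boot all_order all_algebra.
From mathcomp Require Import ring lra.
Import Order.TTheory GRing.Theory Num.Theory.
Local Open Scope ring_scope.

(* D1 is a weighted graph Laplacian plus a positive potential, hence
   positive definite and invertible.  Cramer's rule then gives
   <D1^-1 v, v> = N(a,b,c) / det D1 for explicit polynomials.  The
   determinant is symmetric in a, b, c, so it is the same for D2, whereas
   N(a,b,c) - N(a,c,b) = 7/8 (a-b)(b-c)(a-c)(ab+bc+ca), which vanishes for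
   no pairwise distinct positive a, b, c. *)

Lemma unitmx_coercive (R : realFieldType) n (A : 'M[R]_n) (m : R) :
  0 < m -> (forall v : 'rV_n, m * (v *m v^T) 0 0 <= (v *m A *m v^T) 0 0) ->
  A \in unitmx.
Proof.
move=> m_gt0 coerA; rewrite unitmxE unitfE; apply/negP => /det0P[v nz_v vA0].
have vv_le0 : (v *m v^T) 0 0 <= 0.
  by have := coerA v; rewrite vA0 !mul0mx [in X in _ <= X]mxE pmulr_rle0.
have vv_sqr : (v *m v^T) 0 0 = \sum_j v 0 j ^+ 2.
  by rewrite mxE; apply: eq_bigr => j _; rewrite mxE expr2.
have sum_sqr_eq0 : \sum_j v 0 j ^+ 2 == 0.
  by rewrite eq_le -vv_sqr vv_le0 vv_sqr sumr_ge0 // => j _; rewrite sqr_ge0.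
move: sum_sqr_eq0; rewrite psumr_eq0 => [/allP sqr_eq0|j _]; last exact: sqr_ge0.
case/negP: nz_v; apply/eqP/rowP => j; rewrite mxE.
by have /implyP/(_ isT) := sqr_eq0 j (mem_index_enum j); rewrite sqrf_eq0 => /eqP.
Qed.

Section TorsionD1.

Variable R : realFieldType.
Implicit Types a b c : R.

Lemma D1_coercive a b c (v : 'rV[R]_6) : 0 < a -> 0 < b -> 0 < c ->
  Num.min a (Num.min b c) / 2 * (v *m v^T) 0 0 <= (v *m D1 a b c *m v^T) 0 0.
Proof.
move=> a_gt0 b_gt0 c_gt0; set m := _ / 2.
have [ma mb mc] : [/\ m <= a / 2, m <= b / 2 & m <= c / 2].
  by rewrite !ler_pM2r ?invr_gt0 // !ge_min !lexx ?orbT.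
rewrite !mxE !big_ord_recl !big_ord0 /= !mxE !big_ord_recl !big_ord0 /= !mxE /=.
set y5 := v 0 (lift _ (lift _ (lift _ (lift _ (lift _ _))))).
set y4 := v 0 (lift _ (lift _ (lift _ (lift _ _)))).
set y3 := v 0 (lift _ (lift _ (lift _ _))).
set y2 := v 0 (lift _ (lift _ _)).
set y1 := v 0 (lift _ _).
set y0 := v 0 _.
rewrite -subr_ge0 (_ : _ - _ =
    (a + c / 2 - m) * y0 ^+ 2 + (a / 2 + b - m) * y1 ^+ 2
  + (b / 2 + c - m) * y2 ^+ 2 + (b / 2 - m) * y3 ^+ 2
  + (c / 2 - m) * y4 ^+ 2 + (a / 2 - m) * y5 ^+ 2
  + c / 2 * (y0 - y3) ^+ 2 + a / 2 * (y1 - y4) ^+ 2 + b / 2 * (y2 - y5) ^+ 2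
  + c / 2 * (y3 - y4) ^+ 2 + b / 2 * (y3 - y5) ^+ 2 + a / 2 * (y4 - y5) ^+ 2);
  last by field.
have wsqr_ge0 (k y : R) : 0 <= k -> 0 <= k * y ^+ 2.
  by move=> k_ge0; rewrite mulr_ge0 ?sqr_ge0.
by repeat apply: addr_ge0; apply: wsqr_ge0; lra.
Qed.

Lemma D1_unit a b c : 0 < a -> 0 < b -> 0 < c -> D1 a b c \in unitmx.
Proof.
move=> a_gt0 b_gt0 c_gt0.
apply: unitmx_coercive (fun v => D1_coercive a b c v a_gt0 b_gt0 c_gt0).
by rewrite divr_gt0 // !lt_min a_gt0 b_gt0 c_gt0.
Qed.

(* [D1_den a b c] is [\det (D1 a b c)] and [D1_adjv a b c] is
   [\adj (D1 a b c) *m vones], although only [D1_mul_adjv] is needed.  The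
   rotation (a, b, c) -> (b, c, a) of the weights permutes the vertices of D1
   cyclically, hence the shape of [D1_adjv]. *)
Definition D1_den a b c : R :=
  1/2*b^+2*c^+4 + 9/8*b^+3*c^+3 + 1/2*b^+4*c^+2 + a*b*c^+4
  + 31/8*a*b^+2*c^+3 + 31/8*a*b^+3*c^+2 + a*b^+4*c + 1/2*a^+2*c^+4
  + 31/8*a^+2*b*c^+3 + 439/64*a^+2*b^+2*c^+2 + 31/8*a^+2*b^+3*c
  + 1/2*a^+2*b^+4 + 9/8*a^+3*c^+3 + 31/8*a^+3*b*c^+2 + 31/8*a^+3*b^+2*c
  + 9/8*a^+3*b^+3 + 1/2*a^+4*c^+2 + a^+4*b*c + 1/2*a^+4*b^+2.

Definition adjv_outer a b c : R :=
  7/4*b^+2*c^+3 + 9/4*b^+3*c^+2 + 1/2*b^+4*c + 7/2*a*b*c^+3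
  + 213/32*a*b^+2*c^+2 + 29/8*a*b^+3*c + 1/2*a*b^+4 + 7/4*a^+2*c^+3
  + 83/16*a^+2*b*c^+2 + 9/2*a^+2*b^+2*c + 9/8*a^+2*b^+3 + 3/4*a^+3*c^+2
  + 5/4*a^+3*b*c + 1/2*a^+3*b^+2.

Definition adjv_inner a b c : R :=
  5/2*b^+2*c^+3 + 9/4*b^+3*c^+2 + 5*a*b*c^+3 + 145/16*a*b^+2*c^+2
  + 4*a*b^+3*c + 5/2*a^+2*c^+3 + 77/8*a^+2*b*c^+2 + 275/32*a^+2*b^+2*c
  + 7/4*a^+2*b^+3 + 11/4*a^+3*c^+2 + 41/8*a^+3*b*c + 9/4*a^+3*b^+2
  + 1/2*a^+4*c + 1/2*a^+4*b.

Definition D1_adjv a b c : 'cV[R]_6 :=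
  \col_i nth 0 [:: adjv_outer a b c; adjv_outer b c a; adjv_outer c a b;
                   adjv_inner a b c; adjv_inner b c a; adjv_inner c a b] i.

Definition D1_num a b c : R :=
  adjv_outer a b c + adjv_outer b c a + adjv_outer c a b
  + adjv_inner a b c + adjv_inner b c a + adjv_inner c a b.

Lemma D1_mul_adjv a b c : D1 a b c *m D1_adjv a b c = D1_den a b c *: vones.
Proof.
apply/colP => -[[|[|[|[|[|[|//]]]]]] lt_i6];
  rewrite !mxE !big_ord_recl big_ord0 /= !mxE /=;
  by rewrite /D1_den /adjv_outer /adjv_inner; field.
Qed.

Lemma D1_den_gt0 a b c : 0 < a -> 0 < b -> 0 < c -> 0 < D1_den a b c.
Proof.
move=> a_gt0 b_gt0 c_gt0; rewrite /D1_den.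
by repeat apply: addr_gt0; repeat apply: mulr_gt0;
  rewrite ?exprn_gt0 ?invr_gt0 ?ltr0n.
Qed.

Lemma torsion_D1 a b c : 0 < a -> 0 < b -> 0 < c ->
  torsion (D1 a b c) = D1_num a b c / D1_den a b c.
Proof.
move=> a_gt0 b_gt0 c_gt0; have den_gt0 := D1_den_gt0 a b c a_gt0 b_gt0 c_gt0.
have ones_eq : vones = D1 a b c *m ((D1_den a b c)^-1 *: D1_adjv a b c).
  by rewrite -scalemxAr D1_mul_adjv scalerA mulVf ?gt_eqF ?scale1r.
rewrite /torsion -mulmxA {2}ones_eq mulKmx ?D1_unit // -scalemxAr mxE.
by rewrite !mxE !big_ord_recl big_ord0 /= !mxE /= /D1_num; ring.
Qed.

Lemma D1_den_swap a b c : D1_den a c b = D1_den a b c.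
Proof. by rewrite /D1_den; ring. Qed.

Lemma D1_num_sub_swap a b c :
  D1_num a b c - D1_num a c b = 7/8 * (a - b) * (b - c) * (a - c) * (a*b + b*c + c*a).
Proof. by rewrite /D1_num /adjv_outer /adjv_inner; field. Qed.

End TorsionD1.

Theorem mainTheorem4 (R : realFieldType) (a b c : R) :
  0 < a -> 0 < b -> 0 < c -> a != b -> b != c -> a != c ->
  torsion (D1 a b c) != torsion (D2 a b c).
Proof.
move=> a_gt0 b_gt0 c_gt0 neq_ab neq_bc neq_ac.
rewrite /D2 !torsion_D1 // D1_den_swap -subr_eq0 -mulrBl D1_num_sub_swap.
have sym_gt0 : 0 < a * b + b * c + c * a by rewrite !addr_gt0 ?mulr_gt0.
by repeat apply: mulf_neq0; rewrite ?subr_eq0 // gt_eqF ?invr_gt0 ?ltr0n ?D1_den_gt0.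
Qed.
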